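(* Let $I$ be a finite set of players. For each $\nu\in I$ let $X_\nu\subset\mathbb{R}^{n_\nu}$, let $\succeq_\nu$ be a binary relation on $\mathbb{R}^n=\prod_{\nu\in I}\mathbb{R}^{n_\nu}$, and let $K_\nu:X_{-\nu}\rightrightarrows X_\nu$ be a set-valued map, where $X_{-\nu}=\prod_{j\neq\nu}X_j$. Set $X=\prod_{\nu\in I}X_\nu$ and $K(x)=\prod_{\nu\in I}K_\nu(x^{-\nu})$. Assume that for each $\nu\in I$: (1) $K_\nu$ has non-empty, closed and convex values; (2) $U^s_\nu(x)$ is convex for all $x\in\mathbb{R}^n$; (3) $x^\nu\in\operatorname{cl}(U^s_\nu(x))$ for all $x\in\mathbb{R}^n$. Define $N_0:\mathbb{R}^n\rightrightarrows\mathbb{R}^n$ by $N_0(x)=\prod_{\nu\in I}\big(N_\nu(x)\setminus\{0\}\big)$. If $\hat x$ is a generalized Nash equilibrium, then $\hat x$ solves the Stampacchia quasivariational inequality problem associated to $N_0$ and $K$, i.e. $\hat x\in K(\hat x)$ and there exists $\hat x^*\in N_0(\hat x)$ with $\langle\hat x^*,y-\hat x\rangle\ge0$ for all $y\in K(\hat x)$.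
   Context: Vectors $x\in\mathbb{R}^n$ are written $x=(x^\nu,x^{-\nu})$ with $x^\nu\in\mathbb{R}^{n_\nu}$ and $x^{-\nu}$ the components of the other players. For $w^{-\nu}$, the induced relation on $\mathbb{R}^{n_\nu}$ is $x^\nu\succeq_{\nu,w^{-\nu}}y^\nu$ iff $(x^\nu,w^{-\nu})\succeq_\nu(y^\nu,w^{-\nu})$, and $\succ_{\nu,w^{-\nu}}$ denotes its asymmetric part ($a\succ b$ iff $a\succeq b$ and not $b\succeq a$). For $x\in\mathbb{R}^n$, $U^s_\nu(x)=\{y^\nu\in\mathbb{R}^{n_\nu}: y^\nu\succ_{\nu,x^{-\nu}}x^\nu\}$. For $A\subset\mathbb{R}^m$ and $z\in\mathbb{R}^m$ (no convexity, closedness or membership $z\in A$ required), the normal cone is $\mathscr{N}_A(z)=\{z^*\in\mathbb{R}^m:\langle z^*,y-z\rangle\le 0\ \forall y\in A\}$ if $A\neq\emptyset$ and $\mathscr{N}_A(z)=\mathbb{R}^m$ if $A=\emptyset$. Then $N_\nu(x)=\mathscr{N}_{U^s_\nu(x)}(x^\nu)\subset\mathbb{R}^{n_\nu}$. A point $\hat x\in K(\hat x)$ is a generalized Nash equilibrium if for each $\nu\in I$ there is no $x^\nu\in K_\nu(\hat x^{-\nu})$ with $x^\nu\succ_{\nu,\hat x^{-\nu}}\hat x^\nu$. *)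

From HB Require Import structures.
From mathcomp Require Import all_boot all_order all_algebra.
From mathcomp Require Import all_classical all_reals all_analysis.
Unset Printing Implicit Defensive.
Import Order.TTheory GRing.Theory Num.Theory numFieldNormedType.Exports.
Local Open Scope classical_set_scope.
Local Open Scope ring_scope.

(* R^{n_nu} is 'rV[R]_(n nu); a strategy profile x in R^n = prod_nu R^{n_nu}
   is a dependent function giving each player's block. *)
Definition profile (R : realType) {I : finType} (n : I -> nat) :=
  forall nu : I, 'rV[R]_(n nu).

Section GNEP.
Context {R : realType} {I : finType} {n : I -> nat}.
Local Notation profile := (profile R n).

Definition dotv {m : nat} (u v : 'rV[R]_m) : R := \sum_(i < m) u 0 i * v 0 i.

Definition dotp (u v : profile) : R := \sum_(nu : I) dotv (u nu) (v nu).

Definition subp (u v : profile) : profile := fun nu => u nu - v nu.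

(* (y^nu, x^{-nu}) : replace the nu-th block of x by y. *)
Definition upd (x : profile) (nu : I) (y : 'rV[R]_(n nu)) : profile :=
  fun j => match nu =P j with
           | ReflectT e => eq_rect nu (fun k => 'rV[R]_(n k)) y j e
           | ReflectF _ => x j
           end.

Definition agree_off (nu : I) (x w : profile) := forall j, j != nu -> x j = w j.

Definition strict_part {T : Type} (r : T -> T -> Prop) (a b : T) :=
  r a b /\ ~ r b a.

Definition Us (pref : I -> profile -> profile -> Prop) (nu : I) (x : profile)
  : set 'rV[R]_(n nu) :=
  [set y | strict_part (pref nu) (upd x nu y) (upd x nu (x nu))].

(* normal cone, with the convention N_emptyset(z) = R^m *)
Definition normal_cone {m : nat} (A : set 'rV[R]_m) (z : 'rV[R]_m)
  : set 'rV[R]_m :=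
  if A == set0 then setT
  else [set zs | forall y, A y -> dotv zs (y - z) <= 0].

Definition Nnu (pref : I -> profile -> profile -> Prop) (nu : I) (x : profile)
  : set 'rV[R]_(n nu) := normal_cone (Us pref nu x) (x nu).

Definition N0 (pref : I -> profile -> profile -> Prop) (x : profile)
  : set profile :=
  [set xs | forall nu, Nnu pref nu x (xs nu) /\ xs nu != 0].

Definition inX (X : forall nu : I, set 'rV[R]_(n nu)) (x : profile) :=
  forall nu, X nu (x nu).

Definition inX_off (X : forall nu : I, set 'rV[R]_(n nu)) (nu : I) (x : profile) :=
  forall j, j != nu -> X j (x j).

(* K(x) = prod_nu K_nu(x^{-nu});  K_nu is represented as a map on profiles
   that only depends on x^{-nu} (see hypotheses of the theorem). *)
Definition Kset (K : forall nu : I, profile -> set 'rV[R]_(n nu)) (x : profile)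
  : set profile := [set y | forall nu, K nu x (y nu)].

Definition is_GNE (X : forall nu : I, set 'rV[R]_(n nu))
  (pref : I -> profile -> profile -> Prop)
  (K : forall nu : I, profile -> set 'rV[R]_(n nu)) (xh : profile) :=
  inX X xh /\ Kset K xh xh /\
  forall nu, ~ exists y, K nu xh y /\
     strict_part (pref nu) (upd xh nu y) (upd xh nu (xh nu)).

Definition solves_SQVI (N : profile -> set profile)
  (K : forall nu : I, profile -> set 'rV[R]_(n nu)) (xh : profile) :=
  Kset K xh xh /\
  exists xs, N xh xs /\ forall y, Kset K xh y -> 0 <= dotp xs (subp y xh).

End GNEP.

From HB Require Import structures.
From mathcomp Require Import all_boot all_order all_algebra.
From mathcomp Require Import all_classical all_reals all_analysis.
From mathcomp Require Import ring lra.
Import Order.TTheory GRing.Theory Num.Theory numFieldNormedType.Exports.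
Local Open Scope classical_set_scope.
Local Open Scope ring_scope.

(* At a generalized Nash equilibrium, the strict upper contour set
   U^s_nu(xh) of each player is disjoint from the convex set
   K_nu(xh^{-nu}), which contains xh^nu, and xh^nu lies in the closure of
   U^s_nu(xh).  A hyperplane separating these two convex sets through xh^nu
   has a nonzero normal p_nu that is normal to U^s_nu(xh) at xh^nu and makes
   <p_nu, y - xh^nu> >= 0 on K_nu; the p_nu together form xh^*.
   For the separation theorem in R^m, a convex set C avoiding 0 is separated
   from 0 on each finite subset of C by the minimal-norm point of its convex
   hull, and the finite intersection property of the compact unit sphere
   then yields a single normal for all of C. *)

Lemma continuous_sum (R : numFieldType) (T : topologicalType) (J : Type) (r : seq J)
    (F : J -> T -> R) :
  (forall j, continuous (F j)) -> continuous (fun x => \sum_(j <- r) F j x).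
Proof.
move=> Fc; elim: r => [|j r IH].
  by under eq_fun do rewrite big_nil; exact: cst_continuous.
under eq_fun do rewrite big_cons.
by move=> x; apply: continuousD; [exact: Fc | exact: IH].
Qed.

Section InnerProduct.
Context {R : realType} {m : nat}.
Implicit Types u v w : 'rV[R]_m.

Lemma dotvC u v : dotv u v = dotv v u.
Proof. by apply: eq_bigr => i _; rewrite mulrC. Qed.

Lemma dotvDl u v w : dotv (u + v) w = dotv u w + dotv v w.
Proof. by rewrite /dotv -big_split; apply: eq_bigr => i _; rewrite mxE mulrDl. Qed.

Lemma dotvZl a u w : dotv (a *: u) w = a * dotv u w.
Proof. by rewrite /dotv mulr_sumr; apply: eq_bigr => i _; rewrite mxE mulrA. Qed.

Lemma dotvDr u v w : dotv w (u + v) = dotv w u + dotv w v.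
Proof. by rewrite dotvC dotvDl ![dotv _ w]dotvC. Qed.

Lemma dotvZr a u w : dotv w (a *: u) = a * dotv w u.
Proof. by rewrite dotvC dotvZl dotvC. Qed.

Lemma dotvBr u v w : dotv w (u - v) = dotv w u - dotv w v.
Proof. by rewrite dotvDr -scaleN1r dotvZr mulN1r. Qed.

Lemma dotvv_ge0 u : 0 <= dotv u u.
Proof. by apply: sumr_ge0 => i _; rewrite -expr2 sqr_ge0. Qed.

Lemma dotv_continuous w : continuous (dotv w).
Proof.
apply: continuous_sum => i u; apply: continuousM; last exact: coord_continuous.
exact: cst_continuous.
Qed.

End InnerProduct.

Section Convexity.
Context {R : realType} {m : nat}.
Implicit Types (A : set 'rV[R]_m) (x y : 'rV[R]_m) (t : R).

Lemma convex_setP A : convex_set A <->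
  (forall x y t, A x -> A y -> 0 <= t <= 1 -> A (t *: x + (1 - t) *: y)).
Proof.
split=> [cA x y t Ax Ay /andP[t0 t1]|cA x y t].
  by have := cA x y (Itv01 t0 t1) (mem_set Ax) (mem_set Ay); rewrite inE.
by rewrite !inE => Ax Ay; apply: cA => //; rewrite ge0 le1.
Qed.

Lemma convex_set_sum A k (lam : 'I_k -> R) (s : 'I_k -> 'rV[R]_m) :
  convex_set A -> (forall i, 0 <= lam i) -> \sum_i lam i = 1 ->
  (forall i, A (s i)) -> A (\sum_i lam i *: s i).
Proof.
move=> /convex_setP cA; elim: k lam s => [|k IH] lam s lam_ge0 lam_sum1 As.
  by move: lam_sum1; rewrite big_ord0 => /eqP; rewrite eq_sym oner_eq0.
rewrite big_ord_recl; move: lam_sum1; rewrite big_ord_recl.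
set mu := \sum_(i < k) lam (lift ord0 i) => lam_sum1.
have mu_ge0 : 0 <= mu by apply: sumr_ge0.
have [mu0|mu_neq0] := eqVneq mu 0.
  have lam0 i : lam (lift ord0 i) = 0.
    by move: mu0 => /eqP; rewrite psumr_eq0 // => /allP/(_ i (mem_index_enum _))/eqP.
  rewrite big1 => [|i _]; last by rewrite lam0 scale0r.
  by move: lam_sum1; rewrite mu0 addr0 => ->; rewrite addr0 scale1r.
have Ay : A (\sum_(i < k) (lam (lift ord0 i) / mu) *: s (lift ord0 i)).
  by apply: IH => [i||i]; rewrite ?divr_ge0 -?mulr_suml ?mulfV.
have mu_def : mu = 1 - lam ord0 by rewrite -lam_sum1 addrAC subrr add0r.
have -> : \sum_(i < k) lam (lift ord0 i) *: s (lift ord0 i) =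
    (1 - lam ord0) *: \sum_(i < k) (lam (lift ord0 i) / mu) *: s (lift ord0 i).
  rewrite -mu_def scaler_sumr; apply: eq_bigr => i _.
  by rewrite scalerA mulrCA mulfV ?mulr1.
by apply: cA => //; rewrite lam_ge0 -lam_sum1 lerDl.
Qed.

End Convexity.

Lemma ge0_linear_coef {R : realFieldType} (a b : R) : 0 <= b ->
  (forall t, 0 < t <= 1 -> 0 <= 2 * t * a + t ^+ 2 * b) -> 0 <= a.
Proof.
move=> b_ge0 H; rewrite leNgt; apply/negP => a_lt0.
have ba_gt0 : 0 < b - a by lra.
pose t := - a / (b - a).
have tE : t * (b - a) = - a by rewrite /t mulrVK // unitfE gt_eqF.
have t_gt0 : 0 < t by rewrite /t divr_gt0 // oppr_gt0.
have t_le1 : t <= 1 by rewrite /t ler_pdivrMr // mul1r; lra.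
have := H t; rewrite t_gt0 t_le1 => /(_ isT); nra.
Qed.

Section MinimalNorm.
Context {R : realType} {m : nat}.

Lemma dotv_ge_min_norm (A : set 'rV[R]_m) z a : convex_set A -> A z ->
  (forall b, A b -> dotv z z <= dotv b b) -> A a -> dotv z z <= dotv z a.
Proof.
move=> /convex_setP cA Az z_min Aa.
have seg t : t *: a + (1 - t) *: z = z + t *: (a - z).
  by rewrite scalerBr scalerBl scale1r addrCA.
suff : 0 <= dotv z (a - z) by rewrite dotvBr subr_ge0.
move: (a - z) seg => d seg.
apply: (@ge0_linear_coef _ _ (dotv d d)) => [|t /andP[t_gt0 t_le1]].
  exact: dotvv_ge0.
have : A (t *: a + (1 - t) *: z) by apply: cA => //; rewrite ltW.
move/z_min; rewrite seg !dotvDl !dotvDr !dotvZl !dotvZr [dotv d z]dotvC; nra.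
Qed.

End MinimalNorm.

Section Simplex.
Context {R : realType} {k : nat}.

Definition simplex : set 'rV[R]_k :=
  [set l | (forall i, 0 <= l 0 i) /\ \sum_i l 0 i = 1].

Lemma simplex_delta j : simplex (delta_mx 0 j).
Proof.
split=> [i|]; first by rewrite mxE ler0n.
rewrite (bigD1 j) //= big1 ?addr0 => [|i /negbTE ij]; first by rewrite mxE !eqxx.
by rewrite mxE ij andbF.
Qed.

Lemma simplex_convex : convex_set simplex.
Proof.
apply/convex_setP => l1 l2 t [l1_ge0 l1_sum1] [l2_ge0 l2_sum1] /andP[t_ge0 t_le1].
split=> [i|]; first by rewrite !mxE addr_ge0 ?mulr_ge0 ?subr_ge0.
under eq_bigr do rewrite !mxE.
by rewrite big_split -!mulr_sumr /= l1_sum1 l2_sum1; ring.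
Qed.

Lemma simplex_compact : compact simplex.
Proof.
have closed_coord (P : set R) i : closed P -> closed [set l : 'rV[R]_k | P (l 0 i)].
  exact: (continuous_closedP _).1 (@coord_continuous _ _ _ 0 i) P.
have simplex_closed : closed simplex.
  have -> : simplex = \bigcap_i [set l | 0 <= l 0 i] `&` [set l | \sum_i l 0 i = 1].
    by apply/seteqP; split=> l [l_ge0 l_sum1]; split=> // i *; apply: l_ge0.
  apply: closedI.
    by apply: closed_bigI => i _; exact: (closed_coord _ i (@closed_ge R 0)).
  have sum_continuous : continuous (fun l : 'rV[R]_k => \sum_i l 0 i).
    by apply: continuous_sum => i; exact: coord_continuous.
  exact: (continuous_closedP _).1 sum_continuous _ (@closed_eq R 1).
have cube_compact : compact [set l : 'rV[R]_k | forall i, `[0, 1]%classic (l ord0 i)].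
  exact: rV_compact (fun=> @segment_compact R 0 1).
suff: simplex `<=` [set l | forall i, `[0, 1]%classic (l ord0 i)].
  exact: subclosed_compact simplex_closed cube_compact.
move=> l [l_ge0 l_sum1] i /=.
by rewrite in_itv /= l_ge0 -l_sum1 (bigD1 i) //= lerDl sumr_ge0.
Qed.

End Simplex.

Section RowHull.
Context {R : realType} {k m : nat} (S : 'M[R]_(k, m)).

Definition row_hull : set 'rV[R]_m := [set l *m S | l in simplex].

Lemma row_hull_row i : row_hull (row i S).
Proof. by exists (delta_mx 0 i); [exact: simplex_delta | rewrite -rowE]. Qed.

Lemma row_hull_convex : convex_set row_hull.
Proof.
apply/convex_setP => _ _ t [l1 l1_simplex <-] [l2 l2_simplex <-] t01.
exists (t *: l1 + (1 - t) *: l2); last by rewrite mulmxDl -!scalemxAl.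
exact: (convex_setP _).1 simplex_convex _ _ _ l1_simplex l2_simplex t01.
Qed.

Lemma row_hull_sub (C : set 'rV[R]_m) :
  convex_set C -> (forall i, C (row i S)) -> row_hull `<=` C.
Proof.
move=> cC CS _ [l [l_ge0 l_sum1] <-]; rewrite mulmx_sum_row.
exact: convex_set_sum.
Qed.

Lemma mulmx_coord_continuous j : continuous (fun l : 'rV[R]_k => (l *m S) 0 j).
Proof.
under eq_fun do rewrite mxE.
apply: continuous_sum => i l; apply: continuousM; last exact: cst_continuous.
exact: coord_continuous.
Qed.

End RowHull.

Lemma row_hull_min_norm {R : realType} {k m : nat} (S : 'M[R]_(k.+1, m)) :
  exists2 z, row_hull S z & forall b, row_hull S b -> dotv z z <= dotv b b.
Proof.
have norm_continuous : continuous (fun l : 'rV[R]_k.+1 => dotv (l *m S) (l *m S)).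
  by apply: continuous_sum => j l; apply: continuousM; exact: mulmx_coord_continuous.
have [|l /set_mem l_simplex l_min] :=
  compact_EVT_min _ simplex_compact (continuous_subspaceT norm_continuous).
  by exists (delta_mx 0 ord0); exact: simplex_delta.
exists (l *m S) => [|_ [l' l'_simplex <-]]; first by exists l.
exact/l_min/mem_set.
Qed.

Lemma finite_separation {R : realType} {k m : nat} (C : set 'rV[R]_m)
    (S : 'M[R]_(k.+1, m)) :
  convex_set C -> ~ C 0 -> (forall i, C (row i S)) ->
  exists2 z, z != 0 & forall i, 0 <= dotv z (row i S).
Proof.
move=> cC C0 CS; have [z hull_z z_min] := row_hull_min_norm S.
exists z => [|i].
  by apply/eqP => z0; apply: C0; rewrite -z0; exact: row_hull_sub hull_z.
apply: le_trans (dotvv_ge0 z) _.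
exact: dotv_ge_min_norm (row_hull_convex S) hull_z z_min (row_hull_row S i).
Qed.

Lemma unit_sphere_compact {R : realType} {m : nat} :
  compact [set p : 'rV[R]_m | `|p| = 1].
Proof.
apply: bounded_closed_compact.
  by exists 1; split=> [|M M_gt1 p /= ->]; [exact: num_real | exact: ltW].
exact: (continuous_closedP _).1 (@norm_continuous _ 'rV[R]_m) _ (@closed_eq R 1).
Qed.

Lemma convex_separation {R : realType} {m : nat} (C : set 'rV[R]_m) :
  convex_set C -> ~ C 0 -> C !=set0 ->
  exists2 p, p != 0 & forall c, C c -> dotv p c <= 0.
Proof.
move=> cC C0 [c0 Cc0].
pose S := [set p : 'rV[R]_m | `|p| = 1].
pose H c := [set p : 'rV[R]_m | dotv c p <= 0].
suff [p Hp] : \bigcap_(c in C) (S `&` H c) !=set0.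
  have [Sp _] := Hp c0 Cc0.
  exists p => [|c /Hp[_]]; last by rewrite /H /= dotvC.
  by apply/eqP => p0; move: Sp; rewrite /S /= p0 normr0 => /eqP; rewrite eq_sym oner_eq0.
have := @unit_sphere_compact R m; rewrite compact_In0.
move=> /(_ _ C (fun c => S `&` H c)); apply.
  exists H => // c _.
  exact: (continuous_closedP _).1 (dotv_continuous c) _ (@closed_le R 0).
move=> D DC.
(* c0 is prepended so that P has at least one row. *)
set l := c0 :: finmap.enum_fset D.
pose P := \matrix_(i < size l) nth c0 l i.
have [|z z_neq0 z_ge0] := @finite_separation _ _ _ C P cC C0.
  by move=> i; rewrite rowK; case: i => -[|i] //= i_lt; apply/set_mem/DC/mem_nth.
exists (- `|z|^-1 *: z) => c /= Dc; split.
  by rewrite /S /= normrZ normrN ger0_norm ?invr_ge0 // mulVf // normr_eq0.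
have c_l : (index c l < size l)%N by rewrite index_mem in_cons Dc orbT.
have := z_ge0 (Ordinal c_l); rewrite rowK nth_index ?in_cons ?Dc ?orbT //.
by rewrite /H /= dotvZr mulNr oppr_le0 dotvC => z_c; rewrite mulr_ge0.
Qed.

Lemma normal_cone_separation {R : realType} {m : nat} (U K : set 'rV[R]_m) x :
  convex_set U -> convex_set K -> K x -> closure U x -> (forall y, K y -> ~ U y) ->
  exists2 p, p != 0 & normal_cone U x p /\ forall y, K y -> 0 <= dotv p (y - x).
Proof.
move=> cU cK Kx Ux UK0.
have [u0 Uu0] : U !=set0 by have [u [Uu _]] := Ux setT filterT; exists u.
pose D := [set u - y | u in U & y in K].
have cD : convex_set D.
  apply/convex_setP => _ _ t [u1 Uu1 [y1 Ky1 <-]] [u2 Uu2 [y2 Ky2 <-]] t01.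
  exists (t *: u1 + (1 - t) *: u2); first exact: (convex_setP _).1 cU _ _ _ Uu1 Uu2 t01.
  exists (t *: y1 + (1 - t) *: y2); first exact: (convex_setP _).1 cK _ _ _ Ky1 Ky2 t01.
  by rewrite !scalerBr addrACA opprD.
have D0 : ~ D 0.
  move=> [u Uu [y Ky /eqP]]; rewrite subr_eq0 => /eqP uy.
  by apply: (UK0 y Ky); rewrite -uy.
have [|p p_neq0 p_sep] := convex_separation _ cD D0.
  by exists (u0 - x); exists u0 => //; exists x.
exists p => //; split=> [|y Ky].
  rewrite /normal_cone; have /negbTE -> : U != set0 by apply/set0P; exists u0.
  by move=> u Uu; apply: p_sep; exists u => //; exists x.
have H_closed : closed [set v | dotv p v <= dotv p y].
  exact: (continuous_closedP _).1 (dotv_continuous p) _ (@closed_le R (dotv p y)).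
have UH : U `<=` [set v | dotv p v <= dotv p y].
  by move=> u Uu /=; rewrite -subr_le0 -dotvBr; apply: p_sep; exists u => //; exists y.
have := closureS UH Ux; rewrite -(closure_id _).1 //=.
by rewrite dotvBr subr_ge0.
Qed.

Theorem theorem2 (R : realType) (I : finType) (n : I -> nat)
  (X : forall nu : I, set 'rV[R]_(n nu))
  (pref : I -> profile R n -> profile R n -> Prop)
  (K : forall nu : I, profile R n -> set 'rV[R]_(n nu))
  (* K_nu : X_{-nu} =>> X_nu depends only on x^{-nu} *)
  (hKdep : forall nu x w, agree_off nu x w -> K nu x = K nu w)
  (hKX : forall nu x, inX_off X nu x -> K nu x `<=` X nu)
  (* (1) non-empty, closed, convex values *)
  (h1 : forall nu x, inX_off X nu x ->
          K nu x !=set0 /\ closed (K nu x) /\ convex_set (K nu x))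
  (* (2) U^s_nu(x) convex *)
  (h2 : forall nu (x : profile R n), convex_set (Us pref nu x))
  (* (3) x^nu in cl U^s_nu(x) *)
  (h3 : forall nu (x : profile R n), closure (Us pref nu x) (x nu))
  (xh : profile R n) :
  is_GNE X pref K xh -> solves_SQVI (N0 pref) K xh.
Proof.
move=> [xh_X [xh_K xh_nash]]; split=> //.
have normal nu : {p : 'rV[R]_(n nu) | [/\ Nnu pref nu xh p, p != 0 &
    forall y, K nu xh y -> 0 <= dotv p (y - xh nu)]}.
  apply: cid; have [_ [_ cK]] := h1 nu xh (fun j _ => xh_X j).
  have [|p p_neq0 [pN pK]] :=
    normal_cone_separation _ _ _ (h2 nu xh) cK (xh_K nu) (h3 nu xh).
    by move=> y Ky Uy; apply: (xh_nash nu); exists y.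
  by exists p.
exists (fun nu => sval (normal nu)); split=> [nu|y Ky].
  by have [] := svalP (normal nu).
apply: sumr_ge0 => nu _; have [_ _] := svalP (normal nu); exact.
Qed.
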